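(* Let $(\mathbf{X}_i, Z_i, Y_i)$, $i=1,\dots,n$, be the units of a survey sample, where $\mathbf{X}_i=(X_{i1},\dots,X_{iK})$ is a covariate vector, $Z_i\in\{0,1\}$ is the treatment indicator, and each unit has known sampling probability $p_{Z_i}(\mathbf{X}_i)\in(0,1)$, where $p_z(\mathbf{x}) = P(S=1\mid Z=z,\mathbf{X}=\mathbf{x})$. Suppose the population-level propensity score is estimated by survey-weighted logistic regression with an intercept, i.e. $\widehat{e}_{\text{sp}}(\mathbf{X}_i)=\operatorname{logit}^{-1}(\widehat{\beta}_0+\mathbf{X}_i\widehat{\boldsymbol{\beta}}_{sw}^{\top})$, where $(\widehat{\beta}_0,\widehat{\boldsymbol{\beta}}_{sw})$ is the weighted maximum likelihood estimator using survey weights $1/p_{Z_i}(\mathbf{X}_i)$, i.e. it solves $\sum_{i=1}^n \frac{1}{p_{Z_i}(\mathbf{X}_i)}\big(Z_i-\widehat{e}_{\text{sp}}(\mathbf{X}_i)\big)(1,\mathbf{X}_i)^{\top}=\mathbf{0}$. Then the survey-weighted overlap weights $\big((1-\widehat e_{\text{sp}}(\mathbf{X}_i))/p_1(\mathbf{X}_i)$ for treated units, $\widehat e_{\text{sp}}(\mathbf{X}_i)/p_0(\mathbf{X}_i)$ for control units$\big)$ give exact balance of the weighted means of every covariate: $$\frac{\sum_{i=1}^{n} X_{ik} Z_i (1-\widehat{e}_{\text{sp}}(\mathbf{X}_i))/p_1(\mathbf{X}_i)}{\sum_{i=1}^{n} Z_i (1-\widehat{e}_{\text{sp}}(\mathbf{X}_i))/p_1(\mathbf{X}_i)}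 = \frac{\sum_{i=1}^{n} X_{ik} (1-Z_i)\, \widehat{e}_{\text{sp}}(\mathbf{X}_i)/p_0(\mathbf{X}_i)}{\sum_{i=1}^{n} (1-Z_i)\, \widehat{e}_{\text{sp}}(\mathbf{X}_i)/p_0(\mathbf{X}_i)}, \quad k=1,\dots,K,$$ whenever the denominators are nonzero.
   Context: Setting: a sample of size $n$ is drawn from a superpopulation; $S\in\{0,1\}$ indicates selection into the sample. Treatment $Z$ is assigned before sampling (retrospective design), so sampling probabilities $p_z(\mathbf{x})=P(S=1\mid Z=z,\mathbf{X}=\mathbf{x})$ may depend on treatment and covariates; these are known for sampled units and their inverses are the survey weights. The population-level propensity score is $e_{\text{sp}}(\mathbf{x})=P(Z=1\mid \mathbf{X}=\mathbf{x})$. *)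

From mathcomp Require Import all_boot all_order all_algebra.
From mathcomp Require Import all_classical all_reals all_analysis.
Set Implicit Arguments. Unset Strict Implicit. Unset Printing Implicit Defensive.
Import Order.TTheory GRing.Theory Num.Theory.
Local Open Scope ring_scope.

Definition invlogit {R : realType} (t : R) : R := (1 + expR (- t))^-1.

Definition ehat {R : realType} (K : nat) (b0 : R) (b : 'rV[R]_K) (x : 'rV[R]_K) : R :=
  invlogit (b0 + \sum_(k < K) x ord0 k * b ord0 k).

Definition pz {R : realType} (K : nat) (p0 p1 : 'rV[R]_K -> R) (z : bool) (x : 'rV[R]_K) : R :=
  if z then p1 x else p0 x.

From mathcomp Require Import all_boot all_order all_algebra.
From mathcomp Require Import all_classical all_reals all_analysis.
From mathcomp Require Import ring.
Import Order.TTheory GRing.Theory Num.Theory.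
Local Open Scope ring_scope.

(* For every unit, the treated overlap weight Z (1 - e) / p_1 minus the control
   overlap weight (1 - Z) e / p_0 is the survey-weighted score residual
   (Z - e) / p_Z.  Summing against 1 and against each covariate, the score
   equations of the weighted logistic fit therefore say that the treated and
   control groups have equal weighted totals and equal weighted covariate
   sums, so the two weighted means coincide. *)

Lemma overlap_weightsB (F : fieldType) (z : bool) (e q0 q1 : F) :
  z%:R * (1 - e) / q1 - (1 - z%:R) * e / q0
  = (if z then q1 else q0)^-1 * (z%:R - e).
Proof. by case: z => /=; rewrite ?subrr; ring. Qed.

Lemma overlap_weighted_sums_eq {F : fieldType} {n : nat} {z : 'I_n -> bool}
    {e q0 q1 f : 'I_n -> F} :
  \sum_(i < n) (if z i then q1 i else q0 i)^-1 * ((z i)%:R - e i) * f i = 0 ->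
  \sum_(i < n) f i * (z i)%:R * (1 - e i) / q1 i
  = \sum_(i < n) f i * (1 - (z i)%:R) * e i / q0 i.
Proof.
move=> score; apply/eqP; rewrite -subr_eq0 -sumrB -[X in _ == X]score.
apply/eqP/eq_bigr => i _.
by rewrite -!(mulrA (f i)) -mulrBr overlap_weightsB mulrC.
Qed.

Lemma overlap_weight_totals_eq {F : fieldType} {n : nat} {z : 'I_n -> bool}
    {e q0 q1 : 'I_n -> F} :
  \sum_(i < n) (if z i then q1 i else q0 i)^-1 * ((z i)%:R - e i) = 0 ->
  \sum_(i < n) (z i)%:R * (1 - e i) / q1 i
  = \sum_(i < n) (1 - (z i)%:R) * e i / q0 i.
Proof.
move=> score.
under eq_bigr do rewrite -[(z _)%:R]mul1r.
under [RHS]eq_bigr do rewrite -[1 - _]mul1r.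
apply: (overlap_weighted_sums_eq (f := fun=> 1)).
by under eq_bigr do rewrite mulr1.
Qed.

Theorem proposition1 (R : realType) (n K : nat)
  (X : 'M[R]_(n, K)) (Z : 'I_n -> bool) (p0 p1 : 'rV[R]_K -> R)
  (b0 : R) (b : 'rV[R]_K) :
  (forall i : 'I_n, 0 < pz p0 p1 (Z i) (row i X) < 1) ->
  (* weighted score equation, intercept component *)
  \sum_(i < n) (pz p0 p1 (Z i) (row i X))^-1 * ((Z i)%:R - ehat b0 b (row i X)) = 0 ->
  (* weighted score equations, covariate components *)
  (forall k : 'I_K,
     \sum_(i < n) (pz p0 p1 (Z i) (row i X))^-1 * ((Z i)%:R - ehat b0 b (row i X)) * X i k = 0) ->
  forall k : 'I_K,
    \sum_(i < n) (Z i)%:R * (1 - ehat b0 b (row i X)) / p1 (row i X) != 0 ->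
    \sum_(i < n) (1 - (Z i)%:R) * ehat b0 b (row i X) / p0 (row i X) != 0 ->
    (\sum_(i < n) X i k * (Z i)%:R * (1 - ehat b0 b (row i X)) / p1 (row i X))
      / (\sum_(i < n) (Z i)%:R * (1 - ehat b0 b (row i X)) / p1 (row i X))
    = (\sum_(i < n) X i k * (1 - (Z i)%:R) * ehat b0 b (row i X) / p0 (row i X))
      / (\sum_(i < n) (1 - (Z i)%:R) * ehat b0 b (row i X) / p0 (row i X)).
Proof.
(* Numerators and denominators agree separately. *)
move=> _ score_intercept score_covariates k _ _.
pose e i := ehat b0 b (row i X).
pose q0 i := p0 (row i X); pose q1 i := p1 (row i X).
have totals_eq := @overlap_weight_totals_eq R n Z e q0 q1 score_intercept.
have sums_eq := @overlap_weighted_sums_eq R n Z e q0 q1 (X ^~ k) (score_covariates k).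
by rewrite totals_eq sums_eq.
Qed.
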